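(* There is $C_{\boldsymbol\tau,\boldsymbol\eta}>0$ such that for any zero-average $f,g\in W_0^\infty(\mathbb T^{2n})$ with $L_{\boldsymbol\tau}g=L_{\boldsymbol\eta}f$, there is $P\in W^\infty(\mathbb T^{2n})$ with $L_{\boldsymbol\tau}P=f$, $L_{\boldsymbol\eta}P=g$, and for all $s\ge0$, $\|P\|_s\le C_{\boldsymbol\tau,\boldsymbol\eta}(\|f\|_{s+2\gamma}+\|g\|_{s+2\gamma})$.
   Context: $\boldsymbol\tau=(\tau_1,\dots,\tau_n,0,\dots,0)$, $\boldsymbol\eta=(0,\dots,0,\eta_1,\dots,\eta_n)\in\mathbb R^{2n}$, $n\ge2$, with $\sum\tau_j\eta_j=0$, Diophantine: there are $c,\gamma>0$ with $|\boldsymbol\tau\cdot\mathbf m-p|>c|\mathbf m_1\cdot\mathbf m_1|^{-\gamma}$ if $\mathbf m_1\ne0$ and $|\boldsymbol\eta\cdot\mathbf m-p|>c|\mathbf m_2\cdot\mathbf m_2|^{-\gamma}$ if $\mathbf m_2\ne0$, for $\mathbf m=(\mathbf m_1,\mathbf m_2)\in\mathbb Z^n\times\mathbb Z^n$, $p\in\mathbb Z$. On $L^2(\mathbb T^{2n})$ write $f=\sum_{\mathbf m}f_{\mathbf m}e^{2\pi i\mathbf m\cdot(\mathbf x,\boldsymbol\xi)}$, $\|f\|_s^2=\sum_{\mathbf m}(1+4\pi^2\mathbf m\cdot\mathbf m)^s|f_{\mathbf m}|^2$, $W^\infty(\mathbb T^{2n})=\bigcap_sW^s$, $W^\infty_0$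 its zero-average subspace. For $\boldsymbol\kappa\in\{\boldsymbol\tau,\boldsymbol\eta\}$, $L_{\boldsymbol\kappa}h(\mathbf x,\boldsymbol\xi)=h((\mathbf x,\boldsymbol\xi)+\boldsymbol\kappa)-h(\mathbf x,\boldsymbol\xi)$, i.e. $L_{\boldsymbol\kappa}$ multiplies the $\mathbf m$-th Fourier coefficient by $e^{2\pi i\mathbf m\cdot\boldsymbol\kappa}-1$. *)

From Stdlib Require Import Reals Lra ZArith List.
Open Scope R_scope.

(* Complex numbers as pairs (real part, imaginary part). *)
Definition Cpx := (R * R)%type.
Definition Cmul (a b : Cpx) : Cpx :=
  (fst a * fst b - snd a * snd b, fst a * snd b + snd a * fst b).
Definition Cnorm2 (a : Cpx) : R := fst a * fst a + snd a * snd a.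

(* A lattice point m in Z^(2n) is a list of 2n integers;
   m = (m1, m2) with m1 = firstn n m, m2 = skipn n m. *)
Definition valid (n : nat) (m : list Z) : Prop := length m = (2 * n)%nat.

Fixpoint zdot (m : list Z) (v : list R) : R :=
  match m, v with
  | a :: m', x :: v' => IZR a * x + zdot m' v'
  | _, _ => 0
  end.

Definition zsq (m : list Z) : Z := fold_right (fun a acc => (a * a + acc)%Z) 0%Z m.

Definition is_zero_vec (m : list Z) : Prop := Forall (fun a => a = 0%Z) m.

Fixpoint rdot (u v : list R) : R :=
  match u, v with
  | a :: u', b :: v' => a * b + rdot u' v'
  | _, _ => 0
  end.

(* A function on T^(2n) in L^2 is identified with its family of Fourier
   coefficients f : Z^(2n) -> C (only values at valid indices matter). *)
Definition fourier := list Z -> Cpx.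

(* m . tau with tau = (tau_1..tau_n,0..0); m . eta with eta = (0..0,eta_1..eta_n). *)
Definition dot_tau (n : nat) (tau : list R) (m : list Z) : R := zdot (firstn n m) tau.
Definition dot_eta (n : nat) (eta : list R) (m : list Z) : R := zdot (skipn n m) eta.

Definition shift_mult (theta : R) : Cpx := (cos (2 * PI * theta) - 1, sin (2 * PI * theta)).

Definition L_tau (n : nat) (tau : list R) (h : fourier) : fourier :=
  fun m => Cmul (shift_mult (dot_tau n tau m)) (h m).
Definition L_eta (n : nat) (eta : list R) (h : fourier) : fourier :=
  fun m => Cmul (shift_mult (dot_eta n eta m)) (h m).

Definition sob_weight (s : R) (m : list Z) : R :=
  Rpower (1 + 4 * PI ^ 2 * IZR (zsq m)) s.

Definition sob_partial (s : R) (f : fourier) (l : list (list Z)) : R :=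
  fold_right (fun m acc => sob_weight s m * Cnorm2 (f m) + acc) 0 l.

Definition sob_partials (n : nat) (s : R) (f : fourier) (x : R) : Prop :=
  exists l, NoDup l /\ Forall (valid n) l /\ x = sob_partial s f l.

(* N = ||f||_s^2 (the sum of the nonnegative series, as a least upper bound) *)
Definition sob_norm_sq (n : nat) (s : R) (f : fourier) (N : R) : Prop :=
  is_lub (sob_partials n s f) N.

Definition in_W (n : nat) (s : R) (f : fourier) : Prop :=
  exists B, forall x, sob_partials n s f x -> x <= B.

Definition in_Winf (n : nat) (f : fourier) : Prop := forall s, in_W n s f.

Definition zero_avg (n : nat) (f : fourier) : Prop := f (repeat 0%Z (2 * n)) = (0, 0).

Definition diophantine (n : nat) (tau eta : list R) (c gamma : R) : Prop :=
  0 < c /\ 0 < gamma /\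
  (forall (m : list Z) (p : Z), valid n m -> ~ is_zero_vec (firstn n m) ->
     Rabs (dot_tau n tau m - IZR p) > c * Rpower (IZR (zsq (firstn n m))) (- gamma)) /\
  (forall (m : list Z) (p : Z), valid n m -> ~ is_zero_vec (skipn n m) ->
     Rabs (dot_eta n eta m - IZR p) > c * Rpower (IZR (zsq (skipn n m))) (- gamma)).

(* On the Fourier side L_tau and L_eta are multiplications by e^{2 pi i m.tau} - 1 and
   e^{2 pi i m.eta} - 1, so P is obtained by division: P_m = f_m / (e^{2 pi i m.tau} - 1)
   when m_1 <> 0, P_m = g_m / (e^{2 pi i m.eta} - 1) when m_1 = 0 <> m_2, and P_0 = 0.
   The compatibility L_tau g = L_eta f makes both equations hold at every m, and
   |e^{2 pi i theta} - 1| >= dist(theta, Z) together with the Diophantine condition bounds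
   each divisor from below by c (m.m)^(-gamma), which costs 2 gamma derivatives. *)
From Stdlib Require Import Reals Lra Lia Psatz ZArith List.
Open Scope R_scope.

Definition Cinv (b : Cpx) : Cpx := (fst b / Cnorm2 b, - snd b / Cnorm2 b).
Definition Cdiv (a b : Cpx) : Cpx := Cmul a (Cinv b).

Lemma CmulC a b : Cmul a b = Cmul b a.
Proof. destruct a, b; unfold Cmul; simpl; f_equal; ring. Qed.

Lemma CmulA a b d : Cmul a (Cmul b d) = Cmul (Cmul a b) d.
Proof. destruct a, b, d; unfold Cmul; simpl; f_equal; ring. Qed.

Lemma Cmul1 a : Cmul a (1, 0) = a.
Proof. destruct a; unfold Cmul; simpl; f_equal; ring. Qed.

Lemma Cmul0 a : Cmul a (0, 0) = (0, 0).
Proof. destruct a; unfold Cmul; simpl; f_equal; ring. Qed.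

Lemma Cmul0l a : Cmul (0, 0) a = (0, 0).
Proof. destruct a; unfold Cmul; simpl; f_equal; ring. Qed.

Lemma CmulV b : Cnorm2 b <> 0 -> Cmul b (Cinv b) = (1, 0).
Proof. destruct b as [x y]; unfold Cmul, Cinv, Cnorm2; simpl; intro H; f_equal; field; exact H. Qed.

Lemma CdivK a b : Cnorm2 b <> 0 -> Cmul b (Cdiv a b) = a.
Proof.
intro H; unfold Cdiv.
rewrite (CmulC a), CmulA, CmulV by exact H.
rewrite CmulC; apply Cmul1.
Qed.

Lemma Cmul_eq0 a b : Cnorm2 a <> 0 -> Cmul a b = (0, 0) -> b = (0, 0).
Proof.
intros H E.
rewrite <- (Cmul1 b), <- (CmulV a H), CmulA, (CmulC b a), E.
apply Cmul0l.
Qed.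

Lemma Cnorm2_ge0 a : 0 <= Cnorm2 a.
Proof. destruct a; unfold Cnorm2; simpl; nra. Qed.

Lemma Cnorm2_div a b : Cnorm2 b <> 0 -> Cnorm2 (Cdiv a b) = Cnorm2 a / Cnorm2 b.
Proof. destruct a as [u v], b as [x y]; unfold Cdiv, Cmul, Cinv, Cnorm2; simpl; intro H; field; exact H. Qed.

Lemma sqr_div3_le_1_sub_cos a : - PI / 2 <= a -> a <= PI / 2 -> a * a / 3 <= 1 - cos a.
Proof.
intros H1 H2; destruct (cos_bound a 0 H1 H2) as [_ H].
unfold cos_approx, cos_term in H; simpl in H.
pose proof PI_4; pose proof PI_RGT_0.
assert (a * a <= 4) by nra.
field_simplify in H; nra.
Qed.

Lemma shift_mult0 : shift_mult 0 = (0, 0).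
Proof. unfold shift_mult; rewrite Rmult_0_r, cos_0, sin_0; f_equal; ring. Qed.

Lemma Cnorm2_shift_mult t : Cnorm2 (shift_mult t) = 2 - 2 * cos (2 * PI * t).
Proof.
unfold Cnorm2, shift_mult; simpl.
pose proof (sin2_cos2 (2 * PI * t)) as E; unfold Rsqr in E; nra.
Qed.

(* |e^{2 pi i t} - 1|^2 = 4 sin^2 (pi t) >= 4 (pi t)^2 / 3 >= t^2 near 0. *)
Lemma sqr_le_Cnorm2_shift_mult t : Rabs t <= 1 / 2 -> t * t <= Cnorm2 (shift_mult t).
Proof.
intros Ht; rewrite Cnorm2_shift_mult.
replace (2 * PI * t) with (2 * (PI * t)) by ring.
rewrite cos_2a_cos.
pose proof PI_RGT_0; pose proof PI2_1.
assert (Hpt : - PI / 2 <= PI * t <= PI / 2).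
{ destruct (Rcase_abs t);
    [rewrite Rabs_left in Ht by lra | rewrite Rabs_right in Ht by lra]; split; nra. }
destruct Hpt as [Hpt1 Hpt2].
pose proof (sqr_div3_le_1_sub_cos _ Hpt1 Hpt2).
assert (0 <= cos (PI * t)) by (apply cos_ge_0; lra).
pose proof (COS_bound (PI * t)).
assert (0 <= t * t * (PI * PI - 1)) by (apply Rmult_le_pos; nra).
nra.
Qed.

Lemma cos_period_IZR y p : cos (y + 2 * IZR p * PI) = cos y.
Proof.
destruct p as [|q|q].
- simpl; f_equal; ring.
- rewrite <- (positive_nat_Z q), <- INR_IZR_INZ; apply cos_period.
- replace y with ((y + 2 * IZR (Z.neg q) * PI) + 2 * INR (Pos.to_nat q) * PI) at 2.
  + symmetry; apply cos_period.
  + rewrite INR_IZR_INZ, positive_nat_Z, <- Pos2Z.opp_pos, opp_IZR; ring.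
Qed.

Lemma Cnorm2_shift_mult_sub_IZR t p :
  Cnorm2 (shift_mult (t - IZR p)) = Cnorm2 (shift_mult t).
Proof.
rewrite !Cnorm2_shift_mult.
replace (2 * PI * t) with (2 * PI * (t - IZR p) + 2 * IZR p * PI) by ring.
now rewrite cos_period_IZR.
Qed.

Lemma exists_nearest_IZR t : exists p : Z, Rabs (t - IZR p) <= 1 / 2.
Proof.
destruct (archimed t) as [H1 H2].
destruct (Rle_lt_dec (IZR (up t) - t) (1 / 2)).
- exists (up t); rewrite Rabs_left1 by lra; lra.
- exists (up t - 1)%Z; rewrite minus_IZR, Rabs_right by lra; lra.
Qed.

Lemma sqr_dist_le_Cnorm2_shift_mult t d :
  0 <= d -> (forall p : Z, Rabs (t - IZR p) > d) -> d * d <= Cnorm2 (shift_mult t).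
Proof.
intros Hd H; destruct (exists_nearest_IZR t) as [p Hp].
specialize (H p).
rewrite <- (Cnorm2_shift_mult_sub_IZR t p).
pose proof (sqr_le_Cnorm2_shift_mult _ Hp).
destruct (Rcase_abs (t - IZR p));
  [rewrite Rabs_left in H by lra | rewrite Rabs_right in H by lra]; nra.
Qed.

Lemma Rpower_gt0 x y : 0 < Rpower x y.
Proof. apply exp_pos. Qed.

Lemma inv_Cnorm2_shift_mult_le t c gamma z w :
  0 < c -> 0 <= gamma -> 1 <= z -> z <= w ->
  (forall p : Z, Rabs (t - IZR p) > c * Rpower z (- gamma)) ->
  0 < Cnorm2 (shift_mult t) /\
  / Cnorm2 (shift_mult t) <= / (c * c) * Rpower w (2 * gamma).
Proof.
intros Hc Hgamma Hz Hzw H.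
set (r := Rpower z (- gamma)) in *.
assert (Hr : 0 < r) by apply Rpower_gt0.
assert (Hcr : 0 < c * r) by (apply Rmult_lt_0_compat; lra).
pose proof (sqr_dist_le_Cnorm2_shift_mult t (c * r) ltac:(lra) H).
assert (Hrr : r * r = / Rpower z (2 * gamma)).
{ unfold r; rewrite <- Rpower_plus, <- Rpower_Ropp; f_equal; ring. }
assert (0 < c * r * (c * r)) by nra.
split; [lra |].
apply Rle_trans with (/ (c * r * (c * r))); [apply Rinv_le_contravar; lra |].
replace (c * r * (c * r)) with (c * c * (r * r)) by ring.
rewrite Hrr, Rinv_mult, Rinv_inv.
apply Rmult_le_compat_l; [left; apply Rinv_0_lt_compat; nra |].
apply Rle_Rpower_l; [lra | split; lra].
Qed.

Definition is_zero_vec_dec (l : list Z) : {is_zero_vec l} + {~ is_zero_vec l} :=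
  Forall_dec _ (fun a => Z.eq_dec a 0) l.

Lemma zdot_zero_vec l v : is_zero_vec l -> zdot l v = 0.
Proof.
revert v; induction l as [|a l IH]; intros [|x v] H; simpl; auto.
inversion H; subst; rewrite IH by assumption; ring.
Qed.

Lemma zsq_ge0 l : (0 <= zsq l)%Z.
Proof. induction l; simpl; nia. Qed.

Lemma zsq_app l1 l2 : zsq (l1 ++ l2) = (zsq l1 + zsq l2)%Z.
Proof. induction l1; simpl; lia. Qed.

Lemma zsq_ge1 l : ~ is_zero_vec l -> (1 <= zsq l)%Z.
Proof.
induction l as [|a l IH]; intro H; simpl.
- exfalso; apply H; constructor.
- pose proof (zsq_ge0 l); destruct (Z.eq_dec a 0) as [-> | Ha]; [| nia].
  enough (1 <= zsq l)%Z by lia.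
  apply IH; intro Hl; apply H; constructor; auto.
Qed.

Lemma zsq_firstn_skipn_le k m : (zsq (firstn k m) <= zsq m /\ zsq (skipn k m) <= zsq m)%Z.
Proof.
pose proof (zsq_app (firstn k m) (skipn k m)) as E; rewrite firstn_skipn in E.
pose proof (zsq_ge0 (firstn k m)); pose proof (zsq_ge0 (skipn k m)); lia.
Qed.

Lemma IZR_le_sob_base z m : (z <= zsq m)%Z -> IZR z <= 1 + 4 * PI ^ 2 * IZR (zsq m).
Proof.
intro Hz; apply IZR_le in Hz.
pose proof (IZR_le _ _ (zsq_ge0 m)); pose proof PI2_1.
assert (1 <= 4 * PI ^ 2) by (simpl; nra).
nra.
Qed.

Lemma valid_zero_halves n m :
  valid n m -> is_zero_vec (firstn n m) -> is_zero_vec (skipn n m) -> m = repeat 0%Z (2 * n).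
Proof.
unfold valid, is_zero_vec; intros <- H1 H2.
assert (Hm : Forall (fun a => a = 0%Z) m) by (rewrite <- (firstn_skipn n m); apply Forall_app; auto).
clear H1 H2; induction m as [|a m IH]; simpl; auto.
inversion Hm; subst; f_equal; auto.
Qed.

Lemma sob_weight_plus s t m : sob_weight (s + t) m = sob_weight s m * sob_weight t m.
Proof. apply Rpower_plus. Qed.

Section SobolevDomination.

Variables (n : nat) (s t K : R) (P f g : fourier).
Hypothesis hK : 0 <= K.
Hypothesis dominated : forall m, valid n m ->
  sob_weight s m * Cnorm2 (P m) <= K * (sob_weight t m * (Cnorm2 (f m) + Cnorm2 (g m))).

Lemma sob_partial_dominated l :
  Forall (valid n) l -> sob_partial s P l <= K * (sob_partial t f l + sob_partial t g l).
Proof.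
induction l as [|m l IH]; intro Hl; simpl; [lra |].
inversion Hl; subst.
pose proof (IH H2); pose proof (dominated m H1); lra.
Qed.

Lemma in_W_dominated : in_W n t f -> in_W n t g -> in_W n s P.
Proof.
intros [Bf HBf] [Bg HBg]; exists (K * (Bf + Bg)).
intros x (l & Hnd & Hv & ->).
apply Rle_trans with (1 := sob_partial_dominated l Hv).
apply Rmult_le_compat_l; [exact hK |].
apply Rplus_le_compat; [apply HBf | apply HBg]; exists l; auto.
Qed.

Lemma sob_norm_sq_dominated NP Nf Ng :
  sob_norm_sq n s P NP -> sob_norm_sq n t f Nf -> sob_norm_sq n t g Ng -> NP <= K * (Nf + Ng).
Proof.
intros [_ HP] [Hf _] [Hg _]; apply HP.
intros x (l & Hnd & Hv & ->).
apply Rle_trans with (1 := sob_partial_dominated l Hv).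
apply Rmult_le_compat_l; [exact hK |].
apply Rplus_le_compat; [apply Hf | apply Hg]; exists l; auto.
Qed.

End SobolevDomination.

Lemma sob_norm_sq_ge0 n s h N : sob_norm_sq n s h N -> 0 <= N.
Proof. intros [Hu _]; apply Hu; exists nil; repeat split; constructor. Qed.

Lemma sqrt_le_mul_add k a b N :
  0 <= k -> 0 <= a -> 0 <= b -> N <= k * k * (a + b) -> sqrt N <= k * (sqrt a + sqrt b).
Proof.
intros Hk Ha Hb HN.
pose proof (sqrt_pos a); pose proof (sqrt_pos b).
pose proof (sqrt_sqrt a Ha); pose proof (sqrt_sqrt b Hb).
rewrite <- (sqrt_square (k * (sqrt a + sqrt b))) by nra.
apply sqrt_le_1_alt.
assert (0 <= k * k * (sqrt a * sqrt b)) by (apply Rmult_le_pos; nra).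
nra.
Qed.

Section Coboundary.

Variables (n : nat) (tau eta : list R) (c gamma : R).
Hypotheses (hc : 0 < c) (hgamma : 0 <= gamma).
Hypothesis dio_tau : forall (m : list Z) (p : Z), valid n m -> ~ is_zero_vec (firstn n m) ->
  Rabs (dot_tau n tau m - IZR p) > c * Rpower (IZR (zsq (firstn n m))) (- gamma).
Hypothesis dio_eta : forall (m : list Z) (p : Z), valid n m -> ~ is_zero_vec (skipn n m) ->
  Rabs (dot_eta n eta m - IZR p) > c * Rpower (IZR (zsq (skipn n m))) (- gamma).

Lemma small_divisor_tau m : valid n m -> ~ is_zero_vec (firstn n m) ->
  0 < Cnorm2 (shift_mult (dot_tau n tau m)) /\
  / Cnorm2 (shift_mult (dot_tau n tau m)) <= / (c * c) * sob_weight (2 * gamma) m.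
Proof.
intros Hm Hz; apply inv_Cnorm2_shift_mult_le with (z := IZR (zsq (firstn n m))); auto.
- now apply IZR_le, zsq_ge1.
- apply IZR_le_sob_base, zsq_firstn_skipn_le.
Qed.

Lemma small_divisor_eta m : valid n m -> ~ is_zero_vec (skipn n m) ->
  0 < Cnorm2 (shift_mult (dot_eta n eta m)) /\
  / Cnorm2 (shift_mult (dot_eta n eta m)) <= / (c * c) * sob_weight (2 * gamma) m.
Proof.
intros Hm Hz; apply inv_Cnorm2_shift_mult_le with (z := IZR (zsq (skipn n m))); auto.
- now apply IZR_le, zsq_ge1.
- apply IZR_le_sob_base, zsq_firstn_skipn_le.
Qed.

Lemma shift_mult_tau_zero_vec m :
  is_zero_vec (firstn n m) -> shift_mult (dot_tau n tau m) = (0, 0).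
Proof. intro Hz; unfold dot_tau; rewrite zdot_zero_vec by exact Hz; apply shift_mult0. Qed.

Variables f g : fourier.

Definition coboundary_solution : fourier := fun m =>
  if is_zero_vec_dec (firstn n m) then
    if is_zero_vec_dec (skipn n m) then (0, 0)
    else Cdiv (g m) (shift_mult (dot_eta n eta m))
  else Cdiv (f m) (shift_mult (dot_tau n tau m)).

Lemma Cnorm2_coboundary_solution_le m : valid n m ->
  Cnorm2 (coboundary_solution m)
  <= / (c * c) * sob_weight (2 * gamma) m * (Cnorm2 (f m) + Cnorm2 (g m)).
Proof.
intro Hm.
pose proof (Cnorm2_ge0 (f m)) as Hf; pose proof (Cnorm2_ge0 (g m)) as Hg.
assert (0 < / (c * c) * sob_weight (2 * gamma) m)
  by (apply Rmult_lt_0_compat; [apply Rinv_0_lt_compat; nra | apply Rpower_gt0]).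
unfold coboundary_solution.
destruct (is_zero_vec_dec (firstn n m)) as [Z1 | Z1];
  [destruct (is_zero_vec_dec (skipn n m)) as [Z2 | Z2] |].
- unfold Cnorm2; simpl; nra.
- destruct (small_divisor_eta m Hm Z2) as [Hpos Hinv].
  rewrite Cnorm2_div by lra; unfold Rdiv.
  pose proof (Rmult_le_compat_l _ _ _ Hg Hinv); nra.
- destruct (small_divisor_tau m Hm Z1) as [Hpos Hinv].
  rewrite Cnorm2_div by lra; unfold Rdiv.
  pose proof (Rmult_le_compat_l _ _ _ Hf Hinv); nra.
Qed.

Lemma coboundary_solution_dominated s m : valid n m ->
  sob_weight s m * Cnorm2 (coboundary_solution m)
  <= / (c * c) * (sob_weight (s + 2 * gamma) m * (Cnorm2 (f m) + Cnorm2 (g m))).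
Proof.
intro Hm; rewrite sob_weight_plus.
pose proof (Cnorm2_coboundary_solution_le m Hm).
pose proof (Rpower_gt0 (1 + 4 * PI ^ 2 * IZR (zsq m)) s).
unfold sob_weight in *; nra.
Qed.

Hypotheses (f0 : zero_avg n f) (g0 : zero_avg n g).
Hypothesis compatible : forall m, valid n m -> L_tau n tau g m = L_eta n eta f m.

(* Where one multiplier vanishes, compatibility forces the other datum to vanish. *)
Lemma L_tau_coboundary_solution m : valid n m -> L_tau n tau coboundary_solution m = f m.
Proof.
intro Hm; unfold L_tau, coboundary_solution.
destruct (is_zero_vec_dec (firstn n m)) as [Z1 | Z1].
- rewrite shift_mult_tau_zero_vec, Cmul0l by exact Z1.
  destruct (is_zero_vec_dec (skipn n m)) as [Z2 | Z2].
  + now rewrite (valid_zero_halves n m Hm Z1 Z2), f0.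
  + destruct (small_divisor_eta m Hm Z2) as [Hpos _].
    symmetry; apply (Cmul_eq0 (shift_mult (dot_eta n eta m))); [lra |].
    pose proof (compatible m Hm) as E; unfold L_tau, L_eta in E.
    now rewrite <- E, shift_mult_tau_zero_vec, Cmul0l.
- destruct (small_divisor_tau m Hm Z1) as [Hpos _].
  apply CdivK; lra.
Qed.

Lemma L_eta_coboundary_solution m : valid n m -> L_eta n eta coboundary_solution m = g m.
Proof.
intro Hm; unfold L_eta, coboundary_solution.
destruct (is_zero_vec_dec (firstn n m)) as [Z1 | Z1];
  [destruct (is_zero_vec_dec (skipn n m)) as [Z2 | Z2] |].
- now rewrite Cmul0, (valid_zero_halves n m Hm Z1 Z2), g0.
- destruct (small_divisor_eta m Hm Z2) as [Hpos _].
  apply CdivK; lra.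
- destruct (small_divisor_tau m Hm Z1) as [Hpos _].
  pose proof (compatible m Hm) as E; unfold L_tau, L_eta in E.
  unfold Cdiv; rewrite CmulA, <- E, (CmulC _ (g m)), <- CmulA, CmulV by lra.
  apply Cmul1.
Qed.

End Coboundary.

Theorem proposition2p1 (n : nat) (tau eta : list R) (c gamma : R)
  (hn : (2 <= n)%nat) (htau : length tau = n) (heta : length eta = n)
  (horth : rdot tau eta = 0)
  (hdio : diophantine n tau eta c gamma) :
  exists C : R, 0 < C /\
    forall f g : fourier,
      in_Winf n f -> zero_avg n f ->
      in_Winf n g -> zero_avg n g ->
      (forall m, valid n m -> L_tau n tau g m = L_eta n eta f m) ->
      exists P : fourier,
        in_Winf n P /\
        (forall m, valid n m -> L_tau n tau P m = f m) /\
        (forall m, valid n m -> L_eta n eta P m = g m) /\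
        (forall s : R, 0 <= s ->
           forall NP Nf Ng : R,
             sob_norm_sq n s P NP ->
             sob_norm_sq n (s + 2 * gamma) f Nf ->
             sob_norm_sq n (s + 2 * gamma) g Ng ->
             sqrt NP <= C * (sqrt Nf + sqrt Ng)).
Proof.
destruct hdio as (hc & hgamma & dio_tau & dio_eta).
assert (hgamma_ge0 : 0 <= gamma) by lra.
assert (hK : 0 <= / (c * c)) by (left; apply Rinv_0_lt_compat; nra).
exists (/ c); split; [now apply Rinv_0_lt_compat |].
intros f g Hf f0 Hg g0 compatible.
pose proof (coboundary_solution_dominated n tau eta c gamma hc hgamma_ge0 dio_tau dio_eta f g)
  as dominated.
exists (coboundary_solution n tau eta f g); repeat split.
- intro s; apply (in_W_dominated n s (s + 2 * gamma) _ _ f g hK (dominated s)); auto.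
- now apply L_tau_coboundary_solution with c gamma.
- now apply L_eta_coboundary_solution with c gamma.
- intros s _ NP Nf Ng HNP HNf HNg.
  apply sqrt_le_mul_add; [left; now apply Rinv_0_lt_compat
                         | eapply sob_norm_sq_ge0; eauto | eapply sob_norm_sq_ge0; eauto |].
  rewrite <- Rinv_mult.
  exact (sob_norm_sq_dominated n s (s + 2 * gamma) _ _ f g hK (dominated s) NP Nf Ng HNP HNf HNg).
Qed.
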